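(* Let $\mathbb{H}$ be any real Hilbert space (of dimension at least $2$) and $T\in\mathbb{L}(\ell_4^2,\mathbb{H})$ of rank one with $\|T\|=1$. Then $T$ is an extreme contraction if and only if $M_T=\{\pm(1,0)\}$ or $M_T=\{\pm(0,1)\}$. In particular, if $\mathbb{H}=\ell_2^n$, then the rank one extreme contractions in $\mathbb{L}(\ell_4^2,\ell_2^n)$ are exactly the operators whose matrix representations with respect to the standard ordered bases are of the form $\begin{bmatrix} x_1&0\\ x_2&0\\ \vdots&\vdots\\ x_n&0\end{bmatrix}$ or $\begin{bmatrix} 0&x_1\\ 0&x_2\\ \vdots&\vdots\\ 0&x_n\end{bmatrix}$, where $x_1^2+x_2^2+\cdots+x_n^2=1$.
   Context: $\ell_q^m$ is $\mathbb{R}^m$ with the $q$-norm. $M_T=\{u\in\ell_4^2:\|u\|=1,\ \|Tu\|=\|T\|\}$. An extreme contraction is a norm one operator that is an extreme point of the closed unit ball of $\mathbb{L}(\ell_4^2,\mathbb{H})$ (bounded linear operators, operator norm). *)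

From HB Require Import structures.
From mathcomp Require Import all_boot all_order all_algebra.
From mathcomp Require Import classical_sets boolp reals.
Set Implicit Arguments. Unset Strict Implicit. Unset Printing Implicit Defensive.
Import Order.TTheory GRing.Theory Num.Theory.
Local Open Scope ring_scope.
Local Open Scope classical_set_scope.

Section Defs.
Variable R : realType.

Definition l4norm (u : 'rV[R]_2) : R :=
  Num.sqrt (Num.sqrt (u 0 0 ^+ 4 + u 0 1 ^+ 4)).

Definition e1 : 'rV[R]_2 := \row_(i < 2) (if i == 0 then 1 else 0).
Definition e2 : 'rV[R]_2 := \row_(i < 2) (if i == 0 then 0 else 1).

Variable H : lmodType R.

Definition hnorm (ip : H -> H -> R) (x : H) : R := Num.sqrt (ip x x).

Definition is_real_hilbert (ip : H -> H -> R) : Prop :=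
  [/\ (forall a x y z, ip (a *: x + y) z = a * ip x z + ip y z),
      (forall x y, ip x y = ip y x),
      (forall x, 0 <= ip x x) /\ (forall x, ip x x = 0 -> x = 0),
      (forall s : nat -> H,
         (forall e : R, 0 < e -> exists N : nat, forall m n : nat,
             (N <= m)%N -> (N <= n)%N -> hnorm ip (s m - s n) < e) ->
         exists l : H, forall e : R, 0 < e -> exists N : nat, forall n : nat,
             (N <= n)%N -> hnorm ip (s n - l) < e) &
      (exists x y : H, [/\ ip x x = 1, ip y y = 1 & ip x y = 0])].

(* linear maps l_4^2 -> H (automatically bounded, the domain being finite-dim.) *)
Definition is_lin (T : 'rV[R]_2 -> H) : Prop :=
  forall (a : R) (u v : 'rV[R]_2), T (a *: u + v) = a *: T u + T v.

Definition opnorm (ip : H -> H -> R) (T : 'rV[R]_2 -> H) : R :=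
  sup [set hnorm ip (T u) | u in [set u | l4norm u = 1]].

Definition MT (ip : H -> H -> R) (T : 'rV[R]_2 -> H) : set 'rV[R]_2 :=
  [set u | l4norm u = 1 /\ hnorm ip (T u) = opnorm ip T].

Definition rank_one (T : 'rV[R]_2 -> H) : Prop :=
  (exists y : H, y != 0 /\ forall u, exists c : R, T u = c *: y) /\
  (exists u, T u != 0).

Definition extreme_contraction (ip : H -> H -> R) (T : 'rV[R]_2 -> H) : Prop :=
  is_lin T /\ opnorm ip T = 1 /\
  forall (S1 S2 : 'rV[R]_2 -> H) (t : R),
    is_lin S1 -> is_lin S2 -> opnorm ip S1 <= 1 -> opnorm ip S2 <= 1 ->
    0 < t < 1 -> (forall u, T u = t *: S1 u + (1 - t) *: S2 u) ->
    forall u, S1 u = T u /\ S2 u = T u.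

End Defs.

Definition dotc (R : realType) (n : nat) (x y : 'cV[R]_n) : R := (x^T *m y) 0 0.

From HB Require Import structures.
From mathcomp Require Import all_boot all_order all_algebra.
From mathcomp Require Import classical_sets boolp reals.
From mathcomp Require Import ring lra.
Import Order.TTheory GRing.Theory Num.Theory.
Local Open Scope ring_scope.
Local Open Scope classical_set_scope.
Set Implicit Arguments. Unset Strict Implicit. Unset Printing Implicit Defensive.

(* Write N u = u_1^4 + u_2^4 for the fourth power of the 4-norm.  Along a coordinate
   axis the unit sphere of l_4^2 is flat to third order, N (e_i + s e_j) = 1 + s^4, so a
   contraction S with ||S e_i|| = 1 satisfies
     1 + 2 s <S e_i, S e_j> + s^2 ||S e_j||^2 <= sqrt (1 + s^4) <= 1 + s^4 / 2
   for every real s, which forces S e_j = 0.  Hence an operator with ||T e_i|| = 1 and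
   T e_j = 0 attains its norm exactly at +-e_i and is extreme: in a convex decomposition
   T = t S_1 + (1 - t) S_2, strict convexity of the Hilbert ball gives S_k e_i = T e_i,
   and then S_k e_j = 0.
   Conversely, let T u = f u y be rank one with f = (a, b), a and b both nonzero.  Then f
   attains its norm at a point (p, q) of the sphere with p q <> 0, and a quantitative
   convexity estimate for x^4 shows that f^2 + (delta g)^2 <= 1 on the sphere, where
   g u = u_1 / p - u_2 / q and delta > 0.  For a unit vector w orthogonal to y, T is then
   the midpoint of the two contractions T +- delta g w, so it is not extreme. *)

Section RealFacts.
Variable R : realType.
Implicit Types a b c d p q r x y : R.

Lemma expr4_ge0 x : 0 <= x ^+ 4.
Proof. by rewrite -[4%N]/(2 * 2)%N exprM sqr_ge0. Qed.

Lemma expr4_gt0 x : x != 0 -> 0 < x ^+ 4.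
Proof. by move=> x0; rewrite lt_def expf_neq0 // expr4_ge0. Qed.

Lemma sqrtr_eq1 x : 0 <= x -> Num.sqrt x = 1 -> x = 1.
Proof. by move=> x0 e; rewrite -(sqr_sqrtr x0) e expr1n. Qed.

Lemma exists_cube_root a : exists p, p ^+ 3 = a.
Proof.
set m := `|a| + 1.
have m1 : 1 <= m by rewrite lerDr normr_ge0.
have ha : a <= `|a| by exact: ler_norm.
have hb : - a <= `|a| by rewrite -normrN; exact: ler_norm.
have m3 : m <= m ^+ 3 by rewrite !exprS expr0 mulr1; nra.
have [x _ rx] : exists2 x, - m <= x <= m & root ('X^3 - a%:P) x.
  apply: poly_ivt; first by lra.
  rewrite !hornerE /= (_ : (- m) ^+ 3 = - m ^+ 3); last by ring.
  by apply/andP; split; rewrite /m in m3 *; lra.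
by exists x; move: rx; rewrite /root !hornerE => /eqP; lra.
Qed.

(* (p, q) is the point of the unit sphere of l_4^2 where the functional (a, b) attains
   its norm r^3. *)
Lemma l4_norming_point a b : a != 0 -> b != 0 ->
  exists r p q, [/\ 0 < r, p ^+ 4 + q ^+ 4 = 1, a = r ^+ 3 * p ^+ 3
                    & b = r ^+ 3 * q ^+ 3].
Proof.
move=> a0 b0; have [p0 ep0] := exists_cube_root a; have [q0 eq0] := exists_cube_root b.
have p00 : p0 != 0 by apply: contraNneq a0 => e; rewrite -ep0 e expr0n.
have q00 : q0 != 0 by apply: contraNneq b0 => e; rewrite -eq0 e expr0n.
set s := p0 ^+ 4 + q0 ^+ 4.
have s0 : 0 < s by rewrite ltr_pwDl ?expr4_gt0 ?expr4_ge0.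
set r := Num.sqrt (Num.sqrt s).
have r0 : 0 < r by rewrite !sqrtr_gt0.
have r4 : r ^+ 4 = s.
  by rewrite -[4%N]/(2 * 2)%N exprM sqr_sqrtr ?sqrtr_ge0 // sqr_sqrtr // ltW.
have rn0 : r != 0 by rewrite gt_eqF.
exists r, (p0 / r), (q0 / r); split => //.
- by rewrite !expr_div_n -mulrDl r4 divff // gt_eqF.
- by rewrite -exprMn mulrC divfK.
- by rewrite -exprMn mulrC divfK.
Qed.

(* With h = A X + B Y and d = X - Y one has
   A X^4 + B Y^4 = h^4 + A B d^2 (6 h^2 + 4 (B - A) h d + (A^3 + B^3) d^2),
   and the last factor is at least (h^2 + d^2) / 5. *)
Lemma quartic_mean_gap (A B X Y : R) : 0 <= A -> 0 <= B -> A + B = 1 ->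
  ((A * X + B * Y) ^+ 2 + A * B / 10 * (X - Y) ^+ 2) ^+ 2 <= A * X ^+ 4 + B * Y ^+ 4.
Proof.
move=> A0 B0 AB; have eA : A = 1 - B by lra.
set h := A * X + B * Y; set d := X - Y; set t := B - A.
set Q := 6 * h ^+ 2 + 4 * t * h * d + (A ^+ 3 + B ^+ 3) * d ^+ 2.
have expand : A * X ^+ 4 + B * Y ^+ 4 = h ^+ 4 + A * B * d ^+ 2 * Q.
  by rewrite /Q /h /d /t eA; ring.
have Q_ge : (h ^+ 2 + d ^+ 2) / 5 <= Q.
  have -> : Q = (h ^+ 2 + d ^+ 2) / 5 +
      (29 / 5 * (h + 10 * t / 29 * d) ^+ 2 + (29 + 35 * t ^+ 2) / 580 * d ^+ 2).
    by rewrite /Q /t eA; field.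
  have t2 := sqr_ge0 t; rewrite lerDl.
  by apply: addr_ge0; apply: mulr_ge0; rewrite ?sqr_ge0 //; lra.
have AB_le : A * B <= 1 / 4 by have := sqr_ge0 (B - 1 / 2); rewrite eA; nra.
have AB_ge0 : 0 <= A * B by exact: mulr_ge0.
rewrite expand.
have d2 := sqr_ge0 d; have h2 := sqr_ge0 h.
set D := d ^+ 2 in d2 Q_ge *; set K := h ^+ 2 in h2 Q_ge *.
have -> : h ^+ 4 = K ^+ 2 by rewrite /K -exprM.
set P := A * B in AB_le AB_ge0 *.
have : 0 <= P * D * (Q - (K + D) / 5).
  by apply: mulr_ge0; [exact: mulr_ge0 | rewrite subr_ge0].
have : 0 <= P * D * D * (1 / 5 - P / 100).
  by apply: mulr_ge0; [apply: mulr_ge0 => //; exact: mulr_ge0 | lra].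
nra.
Qed.

Lemma l4_functional_perturbation a b : a != 0 -> b != 0 ->
  (forall x y, x ^+ 4 + y ^+ 4 = 1 -> (a * x + b * y) ^+ 2 <= 1) ->
  exists c d, c != 0 /\ forall x y, x ^+ 4 + y ^+ 4 = 1 ->
    (a * x + b * y) ^+ 2 + (c * x + d * y) ^+ 2 <= 1.
Proof.
move=> a0 b0 f_le1.
have [r [p [q [r0 pq1 ea eb]]]] := l4_norming_point a0 b0.
have p0 : p != 0 by apply: contraNneq a0 => p0; rewrite ea p0 expr0n mulr0.
have q0 : q != 0 by apply: contraNneq b0 => q0; rewrite eb q0 expr0n mulr0.
have r6 : r ^+ 6 <= 1.
  have f_pq : a * p + b * q = r ^+ 3.
    by rewrite ea eb -[X in _ = X]mulr1 -pq1; ring.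
  by have := f_le1 _ _ pq1; rewrite f_pq -exprM.
set A := p ^+ 4; set B := q ^+ 4; set dl := A * B / 10.
have A0 : 0 < A by exact: expr4_gt0.
have B0 : 0 < B by exact: expr4_gt0.
have dl0 : 0 < dl by apply: divr_gt0 => //; exact: mulr_gt0.
have dl1 : dl <= 1 by rewrite /dl; move: pq1; rewrite -/A -/B; nra.
exists (dl / p), (- dl / q); split; first by rewrite mulf_neq0 ?invr_neq0 // gt_eqF.
move=> x y xy1; set X := x / p; set Y := y / q.
have ex : x = p * X by rewrite /X mulrC divfK.
have ey : y = q * Y by rewrite /Y mulrC divfK.
have gap := quartic_mean_gap X Y (ltW A0) (ltW B0) pq1.
rewrite (_ : A * X ^+ 4 + B * Y ^+ 4 = 1) in gap; last by rewrite -xy1 ex ey /A /B; ring.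
rewrite (_ : a * x + b * y = r ^+ 3 * (A * X + B * Y)); last by rewrite ea eb ex ey /A /B; ring.
rewrite (_ : dl / p * x + - dl / q * y = dl * (X - Y)); last first.
  by rewrite ex ey; field; apply/andP.
set h := A * X + B * Y in gap *; set d := X - Y in gap *.
rewrite [(dl * d) ^+ 2]exprMn [(r ^+ 3 * h) ^+ 2]exprMn -exprM.
have h2 := sqr_ge0 h; have d2 := sqr_ge0 d.
have Z1 : h ^+ 2 + dl * d ^+ 2 <= 1.
  by rewrite -(@expr_le1 _ 2) // addr_ge0 // mulr_ge0 // ltW.
have : dl ^+ 2 <= dl by rewrite expr2; nra.
nra.
Qed.

End RealFacts.

Definition is_inner_product (R : realType) (H : lmodType R) (ip : H -> H -> R) :=
  [/\ forall a x y z, ip (a *: x + y) z = a * ip x z + ip y z,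
      forall x y, ip x y = ip y x,
      forall x, 0 <= ip x x
    & forall x, ip x x = 0 -> x = 0].

Lemma real_hilbert_inner_product (R : realType) (H : lmodType R) (ip : H -> H -> R) :
  is_real_hilbert ip -> is_inner_product ip.
Proof. by case=> ? ? [? ?] _ _; split. Qed.

Section InnerProduct.
Variables (R : realType) (H : lmodType R) (ip : H -> H -> R).
Hypothesis ipP : is_inner_product ip.

Lemma ipC x y : ip x y = ip y x.
Proof. by case: ipP. Qed.

Lemma ipDl x y z : ip (x + y) z = ip x z + ip y z.
Proof. by case: ipP => lin _ _ _; rewrite -[x]scale1r lin mul1r scale1r. Qed.

Lemma ip0l z : ip 0 z = 0.
Proof. by apply: (@addrI _ (ip 0 z)); rewrite -ipDl !addr0. Qed.

Lemma ipZl a x z : ip (a *: x) z = a * ip x z.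
Proof. by case: ipP => lin _ _ _; have := lin a x 0 z; rewrite !addr0 ip0l addr0. Qed.

Lemma ipNl x z : ip (- x) z = - ip x z.
Proof. by rewrite -scaleN1r ipZl mulN1r. Qed.

Lemma ipDr x y z : ip z (x + y) = ip z x + ip z y.
Proof. by rewrite !(ipC z) ipDl. Qed.

Lemma ipZr a x z : ip z (a *: x) = a * ip z x.
Proof. by rewrite !(ipC z) ipZl. Qed.

Lemma ipNr x z : ip z (- x) = - ip z x.
Proof. by rewrite !(ipC z) ipNl. Qed.

Lemma ipBr x y z : ip z (x - y) = ip z x - ip z y.
Proof. by rewrite ipDr ipNr. Qed.

Lemma ip_ge0 x : 0 <= ip x x.
Proof. by case: ipP. Qed.

Lemma ip_eq0 x : (ip x x == 0) = (x == 0).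
Proof.
by apply/eqP/eqP => [|->]; [case: ipP => _ _ _; apply | rewrite ip0l].
Qed.

Lemma hnorm_eq1 x : hnorm ip x = 1 <-> ip x x = 1.
Proof. by rewrite /hnorm; split => [/(sqrtr_eq1 (ip_ge0 x))|->]; rewrite ?sqrtr1. Qed.

Lemma ip_add_le x y : ip (x + y) (x + y) <= 2 * ip x x + 2 * ip y y.
Proof.
have := ip_ge0 (x - y).
by rewrite !(ipDl, ipDr, ipNl, ipNr) (ipC y x); lra.
Qed.

Lemma ip_strictly_convex (y s1 s2 : H) (t : R) :
  ip y y = 1 -> ip s1 s1 <= 1 -> ip s2 s2 <= 1 -> 0 < t < 1 ->
  y = t *: s1 + (1 - t) *: s2 -> s1 = y /\ s2 = y.
Proof.
move=> y1 s1_le s2_le /andP[t0 t1] ey.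
have ey' : y = s2 + t *: (s1 - s2) by rewrite ey scalerBr scalerBl scale1r addrCA.
have es1 : s1 = s2 + (s1 - s2) by rewrite addrC subrK.
set d := s1 - s2 in ey' es1; clearbody d.
have : ip d d = 0.
  move: y1 s1_le; rewrite ey' {1 2}es1 !(ipDl, ipDr, ipZl, ipZr) (ipC d s2) => y1 s1_le.
  have tt : 0 < t * (1 - t) by apply: mulr_gt0; lra.
  apply/eqP; rewrite eq_le ip_ge0 andbT -(pmulr_rle0 _ tt); nra.
move/eqP; rewrite ip_eq0 => /eqP d0.
by rewrite ey' es1 d0 scaler0 !addr0.
Qed.

Lemma exists_normalizing (z : H) : z != 0 -> exists k : R, ip (k *: z) (k *: z) = 1.
Proof.
rewrite -ip_eq0 => z0; have zp : 0 < ip z z by rewrite lt_def z0 ip_ge0.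
exists (Num.sqrt (ip z z))^-1.
by rewrite ipZl ipZr mulrA -expr2 exprVn sqr_sqrtr ?ip_ge0 // mulVf.
Qed.

Lemma exists_unit_orthogonal (y : H) :
  (exists x z : H, [/\ ip x x = 1, ip z z = 1 & ip x z = 0]) ->
  ip y y = 1 -> exists w, ip w w = 1 /\ ip y w = 0.
Proof.
move=> [x1 [x2 [x11 x22 x12]]] y1.
pose proj x := x - ip x y *: y.
have proj_orth x : ip y (proj x) = 0 by rewrite ipBr ipZr y1 mulr1 ipC subrr.
suff [x nx] : exists x, proj x != 0.
  have [k nk] := exists_normalizing nx; exists (k *: proj x).
  by rewrite nk ipZr proj_orth mulr0.
apply/not_existsP => proj0.
have ex x : x = ip x y *: y by apply/eqP; rewrite -subr_eq0; apply/negPn/negP/proj0.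
move: x11 x22 x12; rewrite (ex x1) (ex x2) !(ipZl, ipZr) y1 !mulr1 => x11 x22.
have : (ip x1 y * ip x2 y) ^+ 2 = 1 by rewrite exprMn !expr2 x11 x22 mulr1.
by move=> + x12; rewrite x12 expr0n /= => /eqP; rewrite eq_sym oner_eq0.
Qed.

End InnerProduct.

Section L4Norm.
Variable R : realType.
Implicit Types (a s : R) (u : 'rV[R]_2).

Definition l4norm4 u := u 0 0 ^+ 4 + u 0 1 ^+ 4.

Lemma ord2_neq (i j : 'I_2) : i != j -> (i = 0 /\ j = 1) \/ (i = 1 /\ j = 0).
Proof.
by case: i j => [[|[|?]] ?] [[|[|?]] ?] //= _; [left | right]; split; apply: val_inj.
Qed.

Lemma l4norm4_ge0 u : 0 <= l4norm4 u.
Proof. by rewrite addr_ge0 ?expr4_ge0. Qed.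

Lemma l4norm4Z a u : l4norm4 (a *: u) = a ^+ 4 * l4norm4 u.
Proof. by rewrite /l4norm4 !mxE; ring. Qed.

Lemma l4norm_eq1 u : l4norm u = 1 <-> l4norm4 u = 1.
Proof.
split=> [|u1]; last by rewrite /l4norm -/(l4norm4 u) u1 !sqrtr1.
by move/(sqrtr_eq1 (sqrtr_ge0 _))/(sqrtr_eq1 (l4norm4_ge0 u)).
Qed.

Lemma e1_delta : e1 R = 'e_0.
Proof. by apply/rowP => k; rewrite !mxE; case: k => [[|[|?]] ?]. Qed.

Lemma e2_delta : e2 R = 'e_1.
Proof. by apply/rowP => k; rewrite !mxE; case: k => [[|[|?]] ?]. Qed.

Lemma l4norm4_delta (k : 'I_2) : l4norm4 'e_k = 1.
Proof.
by rewrite /l4norm4 !mxE; case: k => [[|[|?]] ?] //=; rewrite expr1n expr0n ?addr0 ?add0r.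
Qed.

Section Axes.
Variables i j : 'I_2.
Hypothesis nij : i != j.

Lemma l4norm4_axes u : l4norm4 u = u 0 i ^+ 4 + u 0 j ^+ 4.
Proof. by case: (ord2_neq nij) => -[-> ->]; rewrite /l4norm4 // addrC. Qed.

Lemma rV2_axes u : u = u 0 i *: 'e_i + u 0 j *: 'e_j.
Proof.
apply/rowP => k; rewrite !mxE /=.
case: (ord2_neq nij) => -[-> ->]; case: k => [[|[|?]] ?] //=;
  by rewrite ?mulr1 ?mulr0 ?addr0 ?add0r; congr (u 0 _); apply: val_inj.
Qed.

Lemma l4norm4_axisD s : l4norm4 ('e_i + s *: 'e_j) = 1 + s ^+ 4.
Proof.
by rewrite l4norm4_axes !mxE !eqxx (negbTE nij) eq_sym (negbTE nij) /=; ring.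
Qed.

End Axes.

Lemma l4norm4_eq0 u : l4norm4 u = 0 -> u = 0.
Proof.
rewrite /l4norm4 => /eqP; rewrite paddr_eq0 ?expr4_ge0 // !expf_eq0 /= => /andP[/eqP u0 /eqP u1].
by rewrite [u](@rV2_axes 0 1) // u0 u1 !scale0r addr0.
Qed.

End L4Norm.

Section Operators.
Variables (R : realType) (H : lmodType R) (ip : H -> H -> R).
Hypothesis ipP : is_inner_product ip.
Implicit Types (a : R) (x : H) (S T : 'rV[R]_2 -> H) (u v : 'rV[R]_2).

Lemma hnormZ a x : hnorm ip (a *: x) = `|a| * hnorm ip x.
Proof.
by rewrite /hnorm (ipZl ipP) (ipZr ipP) mulrA -expr2 sqrtrM ?sqr_ge0 // sqrtr_sqr.
Qed.

Lemma is_linD T u v : is_lin T -> T (u + v) = T u + T v.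
Proof. by move=> Tlin; have := Tlin 1 u v; rewrite !scale1r. Qed.

Lemma is_lin0 T : is_lin T -> T 0 = 0.
Proof. by move=> Tlin; apply: (@addrI _ (T 0)); rewrite -is_linD // !addr0. Qed.

Lemma is_linZ T a u : is_lin T -> T (a *: u) = a *: T u.
Proof. by move=> Tlin; have := Tlin a u 0; rewrite !addr0 is_lin0 // addr0. Qed.

Lemma is_lin_add S T : is_lin S -> is_lin T -> is_lin (fun u => S u + T u).
Proof. by move=> Slin Tlin a u v; rewrite Slin Tlin scalerDr addrACA. Qed.

Lemma is_lin_sub S T : is_lin S -> is_lin T -> is_lin (fun u => S u - T u).
Proof. by move=> Slin Tlin a u v; rewrite Slin Tlin scalerBr opprD addrACA. Qed.

Lemma opnorm_le T c : (forall u, l4norm4 u = 1 -> hnorm ip (T u) <= c) -> opnorm ip T <= c.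
Proof.
move=> T_le; apply: ge_sup => [|_ [u /l4norm_eq1 u1 <-]]; last exact: T_le.
by exists (hnorm ip (T 'e_0)), 'e_0; rewrite //= l4norm_eq1 l4norm4_delta.
Qed.

Lemma opnorm_has_sup T : is_lin T -> has_sup [set hnorm ip (T u) | u in [set u | l4norm u = 1]].
Proof.
move=> Tlin; split; first by exists (hnorm ip (T 'e_0)), 'e_0; rewrite //= l4norm_eq1 l4norm4_delta.
exists (Num.sqrt (2 * ip (T 'e_0) (T 'e_0) + 2 * ip (T 'e_1) (T 'e_1))).
move=> _ [u /l4norm_eq1 u1 <-]; rewrite /hnorm ler_sqrt; last first.
  by rewrite addr_ge0 // mulr_ge0 // ip_ge0.
rewrite [u](@rV2_axes _ 0 1) // is_linD // !is_linZ //; apply: le_trans (ip_add_le ipP _ _) _.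
rewrite !(ipZl ipP, ipZr ipP) ![u 0 _ * (u 0 _ * _)]mulrA -!expr2.
have sqr_le1 (x y : R) : x ^+ 4 + y ^+ 4 = 1 -> x ^+ 2 <= 1.
  move=> xy; rewrite -(@expr_le1 _ 2) ?sqr_ge0 // -exprM -xy lerDl.
  exact: expr4_ge0.
have u0_le := sqr_le1 _ _ u1; have u1_le := sqr_le1 _ _ (etrans (addrC _ _) u1).
by apply: lerD; rewrite ler_pM2l //; apply: ler_piMl; rewrite ?ip_ge0.
Qed.

Lemma hnorm_le_opnorm T u : is_lin T -> l4norm4 u = 1 -> hnorm ip (T u) <= opnorm ip T.
Proof.
move=> Tlin u1; apply: sup_upper_bound; first exact: opnorm_has_sup.
by exists u; rewrite //= l4norm_eq1.
Qed.

Lemma contraction_sqr_le S u : is_lin S -> opnorm ip S <= 1 ->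
  ip (S u) (S u) <= Num.sqrt (l4norm4 u).
Proof.
move=> Slin S1.
have [/l4norm4_eq0 ->|u0] := eqVneq (l4norm4 u) 0.
  by rewrite is_lin0 // ip0l // sqrtr_ge0.
have u_gt0 : 0 < l4norm4 u by rewrite lt_def u0 l4norm4_ge0.
set m := l4norm u.
have m_gt0 : 0 < m by rewrite !sqrtr_gt0.
have m2 : m ^+ 2 = Num.sqrt (l4norm4 u) by rewrite sqr_sqrtr // sqrtr_ge0.
have m4 : m ^+ 4 = l4norm4 u by rewrite -[4%N]/(2 * 2)%N exprM m2 sqr_sqrtr // ltW.
have v1 : l4norm4 (m^-1 *: u) = 1 by rewrite l4norm4Z exprVn m4 mulVf // gt_eqF.
have Sv_le1 : ip (S (m^-1 *: u)) (S (m^-1 *: u)) <= 1.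
  rewrite -(@ler_sqrt _ _ 1) // sqrtr1; apply: le_trans S1.
  exact: hnorm_le_opnorm.
have -> : S u = m *: S (m^-1 *: u) by rewrite -is_linZ // scalerA divff ?gt_eqF ?scale1r.
rewrite (ipZl ipP) (ipZr ipP) mulrA -expr2 m2.
by apply: ler_piMr; rewrite ?sqrtr_ge0.
Qed.

Section Axes.
Variables i j : 'I_2.
Hypothesis nij : i != j.

Lemma is_lin_axes T u : is_lin T -> T u = u 0 i *: T 'e_i + u 0 j *: T 'e_j.
Proof. by move=> Tlin; rewrite {1}(rV2_axes nij u) Tlin is_linZ. Qed.

Lemma contraction_axis_vanish S : is_lin S -> opnorm ip S <= 1 ->
  ip (S 'e_i) (S 'e_i) = 1 -> S 'e_j = 0.
Proof.
move=> Slin S1 Si1; set c := ip (S 'e_j) (S 'e_j).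
have sqrt_le (s : R) : Num.sqrt (1 + s ^+ 4) <= 1 + s ^+ 4 / 2.
  have s4 := expr4_ge0 s.
  rewrite -(ger0_norm (_ : 0 <= 1 + s ^+ 4 / 2)) -?sqrtr_sqr ?ler_wsqrtr //; last lra.
  by rewrite sqrrD expr1n; have := sqr_ge0 (s ^+ 4); lra.
have bound (s : R) : 1 + 2 * s * ip (S 'e_i) (S 'e_j) + s ^+ 2 * c <= 1 + s ^+ 4 / 2.
  apply: le_trans (sqrt_le s); rewrite -(l4norm4_axisD nij).
  apply: le_trans (contraction_sqr_le _ Slin S1); rewrite is_linD // is_linZ //.
  by rewrite !(ipDl ipP, ipDr ipP, ipZl ipP, ipZr ipP) Si1 (ipC ipP (S 'e_j)) -/c; lra.
have c0 : 0 <= c := ip_ge0 ipP _.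
have := bound (Num.sqrt c); have := bound (- Num.sqrt c).
rewrite sqrrN -[4%N]/(2 * 2)%N !exprM sqrrN sqr_sqrtr // => b1 b2.
apply/eqP; rewrite -(ip_eq0 ipP) -/c -(sqrf_eq0 c) eq_le sqr_ge0 andbT; lra.
Qed.

Lemma axis_coord_le1 u : l4norm4 u = 1 -> `|u 0 i| <= 1.
Proof.
rewrite (l4norm4_axes nij) => u1; rewrite -(@expr_le1 _ 4) // -normrX ger0_norm ?expr4_ge0 //.
by rewrite -u1 lerDl expr4_ge0.
Qed.

Lemma opnorm_axis T : is_lin T -> T 'e_j = 0 -> opnorm ip T = hnorm ip (T 'e_i).
Proof.
move=> Tlin Tj0; have Ti u : T u = u 0 i *: T 'e_i.
  by rewrite (is_lin_axes u Tlin) Tj0 scaler0 addr0.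
apply/eqP; rewrite eq_le hnorm_le_opnorm ?l4norm4_delta // andbT.
apply: opnorm_le => u u1; rewrite Ti hnormZ; apply: ler_piMl; last exact: axis_coord_le1.
by rewrite sqrtr_ge0.
Qed.

Lemma MT_axis T : is_lin T -> opnorm ip T = 1 -> T 'e_j = 0 ->
  MT ip T = [set u | u = 'e_i \/ u = - 'e_i].
Proof.
move=> Tlin T1 Tj0; have Ti1 : hnorm ip (T 'e_i) = 1 by rewrite -opnorm_axis.
have ei_i : ('e_i : 'rV[R]_2) 0 i = 1 by rewrite mxE !eqxx.
have ei_j : ('e_i : 'rV[R]_2) 0 j = 0 by rewrite mxE eq_sym (negbTE nij) andbF.
have hnormT u : hnorm ip (T u) = `|u 0 i|.
  by rewrite (is_lin_axes u Tlin) Tj0 scaler0 addr0 hnormZ Ti1 mulr1.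
apply/seteqP; split => u; rewrite /MT /= T1 l4norm_eq1 hnormT; last first.
  case=> ->; first by rewrite l4norm4_delta ei_i normr1.
  by rewrite -scaleN1r l4norm4Z l4norm4_delta mxE ei_i !mulr1 normrN normr1; split=> //; ring.
case=> u1 ui1; have uj : u 0 j = 0.
  have ui4 : u 0 i ^+ 4 = 1 by rewrite -[LHS]ger0_norm ?expr4_ge0 // normrX ui1 expr1n.
  move: u1; rewrite (l4norm4_axes nij) ui4 -[X in _ = X]addr0 => /addrI /eqP.
  by rewrite expf_eq0 => /andP[_ /eqP].
by move/eqP: ui1; rewrite eqr_norml ler01 andbT => /orP[] /eqP ui;
  rewrite [u](rV2_axes nij) uj scale0r addr0 ui ?scaleN1r ?scale1r; [left | right].
Qed.

Lemma extreme_contraction_axis T : is_lin T -> opnorm ip T = 1 ->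
  ip (T 'e_i) (T 'e_i) = 1 -> extreme_contraction ip T.
Proof.
move=> Tlin T1 Ti1; have T_le1 : opnorm ip T <= 1 by rewrite T1.
have Tj0 := contraction_axis_vanish Tlin T_le1 Ti1.
split=> //; split=> // S1 S2 t S1lin S2lin S1_le S2_le t01 TS.
have Si_le S : is_lin S -> opnorm ip S <= 1 -> ip (S 'e_i) (S 'e_i) <= 1.
  by move=> Slin S_le; have := contraction_sqr_le 'e_i Slin S_le; rewrite l4norm4_delta sqrtr1.
have [S1i S2i] := ip_strictly_convex ipP Ti1 (Si_le _ S1lin S1_le) (Si_le _ S2lin S2_le)
  t01 (TS 'e_i).
have S1j := contraction_axis_vanish S1lin S1_le (etrans (congr2 ip S1i S1i) Ti1).
have S2j := contraction_axis_vanish S2lin S2_le (etrans (congr2 ip S2i S2i) Ti1).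
move=> u; rewrite (is_lin_axes u S1lin) (is_lin_axes u S2lin) (is_lin_axes u Tlin).
by rewrite S1i S2i S1j S2j Tj0.
Qed.

End Axes.

Lemma extreme_contraction_perturb T S : extreme_contraction ip T -> is_lin S ->
  opnorm ip (fun u => T u + S u) <= 1 -> opnorm ip (fun u => T u - S u) <= 1 ->
  forall u, S u = 0.
Proof.
move=> [Tlin [_ Text]] Slin TS_le TS'_le u.
have half : 0 < (2^-1 : R) < 1 by rewrite invr_gt0 invf_lt1 ?ltr0n ?ltr1n.
have decomp v : T v = 2^-1 *: (T v + S v) + (1 - 2^-1) *: (T v - S v).
  rewrite (_ : 1 - 2^-1 = 2^-1); last by field.
  by rewrite -scalerDr addrACA subrr addr0 -mulr2n -scaler_nat scalerA mulVf ?pnatr_eq0 ?scale1r.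
have [TSu _] := Text _ _ _ (is_lin_add Tlin Slin) (is_lin_sub Tlin Slin) TS_le TS'_le half decomp u.
by apply: (@addrI _ (T u)); rewrite TSu addr0.
Qed.

Lemma opnorm_orthogonal_le (f g : 'rV[R]_2 -> R) (y w : H) :
  ip y y = 1 -> ip w w = 1 -> ip y w = 0 ->
  (forall u, l4norm4 u = 1 -> f u ^+ 2 + g u ^+ 2 <= 1) ->
  opnorm ip (fun u => f u *: y + g u *: w) <= 1.
Proof.
move=> y1 w1 yw fg_le; apply: opnorm_le => u u1.
rewrite /hnorm -sqrtr1 ler_sqrt //.
rewrite !(ipDl ipP, ipDr ipP, ipZl ipP, ipZr ipP) y1 w1 (ipC ipP w) yw.
by have := fg_le u u1; rewrite !expr2; lra.
Qed.

Lemma is_lin_coord_scale (c d : R) (y : H) : is_lin (fun u => (c * u 0 0 + d * u 0 1) *: y).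
Proof. by move=> e u v; rewrite !mxE scalerA -scalerDl; congr (_ *: _); ring. Qed.

Lemma rank_one_unit_range T : is_lin T ->
  (exists y : H, y != 0 /\ forall u, exists c : R, T u = c *: y) ->
  exists y a b, ip y y = 1 /\ T = fun u => (a * u 0 0 + b * u 0 1) *: y.
Proof.
move=> Tlin [y0 [y00 Ty0]].
have [k y1] := exists_normalizing ipP y00; exists (k *: y0).
have k0 : k != 0.
  by apply/eqP => k0; move: y1; rewrite k0 scale0r ip0l // => /eqP; rewrite eq_sym oner_eq0.
have Ty u : exists c, T u = c *: (k *: y0).
  by have [c ->] := Ty0 u; exists (c / k); rewrite scalerA divfK.
have [a Ta] := Ty 'e_0; have [b Tb] := Ty 'e_1; exists a, b; split=> //.
apply: funext => u; rewrite (@is_lin_axes 0 1) // Ta Tb !scalerA -scalerDl.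
by congr (_ *: _); ring.
Qed.

Lemma rank_one_functional_le1 (a b : R) (y : H) : ip y y = 1 ->
  opnorm ip (fun u => (a * u 0 0 + b * u 0 1) *: y) <= 1 ->
  forall x z : R, x ^+ 4 + z ^+ 4 = 1 -> (a * x + b * z) ^+ 2 <= 1.
Proof.
move=> y1 T_le1 x z xz1; set u := x *: 'e_0 + z *: 'e_1 : 'rV[R]_2.
have u1 : l4norm4 u = 1 by rewrite -xz1 /l4norm4 !mxE /=; ring.
have := le_trans (hnorm_le_opnorm (is_lin_coord_scale a b y) u1) T_le1.
rewrite hnormZ (hnorm_eq1 ipP _).2 // mulr1 -(@expr_le1 _ 2) // real_normK ?num_real //.
by rewrite !mxE /= !mulr1 !mulr0 addr0 add0r.
Qed.

Lemma rank_one_extreme_axis T :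
  (exists x z : H, [/\ ip x x = 1, ip z z = 1 & ip x z = 0]) -> is_lin T ->
  (exists y : H, y != 0 /\ forall u, exists c : R, T u = c *: y) ->
  extreme_contraction ip T -> T 'e_1 = 0 \/ T 'e_0 = 0.
Proof.
move=> orthonormal Tlin Trange Text.
have [y [a [b [y1 Tf]]]] := rank_one_unit_range Tlin Trange.
have [a0|a0] := eqVneq a 0; first by right; rewrite Tf !mxE /= a0 mulr0 mul0r addr0 scale0r.
have [b0|b0] := eqVneq b 0; first by left; rewrite Tf !mxE /= b0 mulr0 mul0r addr0 scale0r.
have T_le1 : opnorm ip T <= 1 by case: Text => _ [-> _].
rewrite Tf in T_le1.
have [c [d [c0 cd_le]]] := l4_functional_perturbation a0 b0 (rank_one_functional_le1 y1 T_le1).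
have [w [w1 yw]] := exists_unit_orthogonal ipP orthonormal y1.
pose g u := c * u 0 0 + d * u 0 1.
have Tg_le : opnorm ip (fun u => T u + g u *: w) <= 1.
  by rewrite Tf; apply: opnorm_orthogonal_le => // u; exact: cd_le.
have Tg'_le : opnorm ip (fun u => T u - g u *: w) <= 1.
  rewrite (_ : (fun u => _) = fun u => (a * u 0 0 + b * u 0 1) *: y + (- g u) *: w).
    by apply: opnorm_orthogonal_le => // u; rewrite sqrrN; exact: cd_le.
  by apply: funext => u; rewrite Tf scaleNr.
have /eqP := extreme_contraction_perturb Text (is_lin_coord_scale c d w) Tg_le Tg'_le 'e_0.
rewrite scaler_eq0 !mxE /= mulr1 mulr0 addr0 (negbTE c0) /=.
by rewrite -(ip_eq0 ipP) w1 oner_eq0.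
Qed.

Lemma MT_unit T u : opnorm ip T = 1 -> MT ip T u -> ip (T u) (T u) = 1.
Proof. by move=> T1 [_]; rewrite T1 => /(hnorm_eq1 ipP). Qed.

Lemma extreme_rank_one_iff_MT T :
  (exists x z : H, [/\ ip x x = 1, ip z z = 1 & ip x z = 0]) -> is_lin T ->
  (exists y : H, y != 0 /\ forall u, exists c : R, T u = c *: y) -> opnorm ip T = 1 ->
  extreme_contraction ip T <->
    MT ip T = [set u | u = e1 R \/ u = - e1 R] \/
    MT ip T = [set u | u = e2 R \/ u = - e2 R].
Proof.
move=> orthonormal Tlin Trank T1; rewrite e1_delta e2_delta; split=> [Text|].
  by case: (rank_one_extreme_axis orthonormal Tlin Trank Text) => Tj0;
    [left; apply: (@MT_axis 0 1) | right; apply: (@MT_axis 1 0)].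
case=> MTe; [apply: (@extreme_contraction_axis 0 1) | apply: (@extreme_contraction_axis 1 0)];
  rewrite // (MT_unit T1) // MTe; by left.
Qed.

End Operators.

Section Matrices.
Variables (R : realType) (n : nat).
Implicit Types (x : 'cV[R]_n) (A : 'M[R]_(n, 2)).

Lemma dotcE x z : dotc x z = \sum_i x i 0 * z i 0.
Proof. by rewrite /dotc !mxE; apply: eq_bigr => i _; rewrite !mxE. Qed.

Lemma sum_sqr_dotc x : \sum_(i < n) x i 0 ^+ 2 = dotc x x.
Proof. by rewrite dotcE; apply: eq_bigr => i _; rewrite expr2. Qed.

Lemma dotc_inner_product : is_inner_product (@dotc R n).
Proof.
split=> [a x y z | x y | x | x].
- by rewrite !dotcE mulr_sumr -big_split; apply: eq_bigr => i _; rewrite !mxE mulrDl mulrA.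
- by rewrite !dotcE; apply: eq_bigr => i _; rewrite mulrC.
- by rewrite -sum_sqr_dotc sumr_ge0 // => i _; rewrite sqr_ge0.
rewrite -sum_sqr_dotc => /eqP; rewrite psumr_eq0 => [/allP x0|i _]; last exact: sqr_ge0.
apply/matrixP => i j; rewrite [j]ord1 mxE.
by have /implyP/(_ isT) := x0 i (mem_index_enum _); rewrite sqrf_eq0 => /eqP.
Qed.

Lemma dotc_delta (i j : 'I_n) : dotc (delta_mx i 0 : 'cV[R]_n) (delta_mx j 0) = (i == j)%:R.
Proof.
rewrite dotcE (bigD1 i) //= big1 => [|k ki]; last by rewrite !mxE (negbTE ki) mul0r.
by rewrite !mxE eqxx mul1r addr0 andbT.
Qed.

Lemma dotc_orthonormal : (2 <= n)%N ->
  exists x z : 'cV[R]_n, [/\ dotc x x = 1, dotc z z = 1 & dotc x z = 0].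
Proof.
move=> n2; have n0 : (0 < n)%N by apply: leq_trans n2.
exists (delta_mx (Ordinal n0) 0), (delta_mx (Ordinal n2) 0).
by rewrite !dotc_delta !eqxx.
Qed.

Lemma is_lin_mulmx A : is_lin (fun u : 'rV[R]_2 => A *m u^T).
Proof. by move=> a u v; rewrite linearD linearZ /= mulmxDr scalemxAr. Qed.

Lemma rank_one_mulmx A : \rank A = 1%N ->
  exists y : 'cV[R]_n, y != 0 /\ forall u : 'rV[R]_2, exists c : R, A *m u^T = c *: y.
Proof.
move=> rA; have rAT : \rank A^T = 1%N by rewrite mxrank_tr.
have [i Ai] : exists i, row i A^T != 0.
  apply/not_existsP => A0; move: rAT; rewrite (_ : A^T = 0) ?mxrank0 //.
  by apply/row_matrixP => i; rewrite row0; apply/eqP/negPn/negP/A0.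
have rAi : \rank (row i A^T) = 1%N by rewrite rank_rV Ai.
have AT_sub : (A^T <= row i A^T)%MS.
  have [_] := mxrank_leqif_sup (row_sub i A^T).
  by rewrite rAT rAi eqxx => /esym.
exists (row i A^T)^T; split; first by rewrite trmx_eq0.
move=> u; have [c uA] := sub_rVP (submx_trans (submxMl u A^T) AT_sub).
by exists c; rewrite -[A *m u^T]trmxK trmx_mul trmxK uA linearZ.
Qed.

Lemma row_mx_delta0 x : row_mx x (0 : 'cV[R]_n) = x *m ('e_0 : 'rV[R]_2).
Proof.
apply/matrixP => r k; rewrite !mxE big_ord1 !mxE.
by case: splitP => l; rewrite !ord1 -[k == _]val_eqE => /= ->; rewrite ?mxE ?mulr1 ?mulr0.
Qed.

Lemma row_mx_delta1 x : row_mx (0 : 'cV[R]_n) x = x *m ('e_1 : 'rV[R]_2).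
Proof.
apply/matrixP => r k; rewrite !mxE big_ord1 !mxE.
by case: splitP => l; rewrite !ord1 -[k == _]val_eqE => /= ->; rewrite ?mxE ?mulr1 ?mulr0.
Qed.

Lemma mulmx_delta_tr A (k : 'I_2) : A *m ('e_k)^T = col k A.
Proof. by rewrite trmx_delta colE. Qed.

Lemma rank_mulmx_delta x (k : 'I_2) : x != 0 -> \rank (x *m ('e_k : 'rV[R]_2)) = 1%N.
Proof.
move=> x0; rewrite mxrankMfree; first by rewrite -mxrank_tr rank_rV trmx_eq0 x0.
by rewrite /row_free mxrank_delta.
Qed.

Lemma mulmx_delta_axis x (i k : 'I_2) :
  x *m ('e_i : 'rV[R]_2) *m ('e_k)^T = (i == k)%:R *: x.
Proof.
rewrite -mulmxA trmx_delta mul_delta_mx_cond.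
case: (i == k); rewrite ?mulr1n ?mulr0n ?scale1r ?scale0r ?mulmx0 //.
by rewrite [delta_mx _ _]mx11_scalar mxE !eqxx mul_mx_scalar scale1r.
Qed.

Section Axes.
Variables i j : 'I_2.
Hypothesis nij : i != j.

Lemma col_axis_mx A : col j A = 0 -> A = col i A *m 'e_i.
Proof.
move=> Aj; apply/row_matrixP => r; rewrite row_mul [LHS](rV2_axes nij).
have Arj : (row r A) 0 j = 0 by move/matrixP/(_ r 0): Aj; rewrite !mxE.
rewrite Arj scale0r addr0 -mul_scalar_mx; congr (_ *m _).
by apply/matrixP => ? ?; rewrite !ord1 !mxE.
Qed.

Lemma extreme_mulmx_axis x : dotc x x = 1 ->
  extreme_contraction (@dotc R n) (fun u => x *m 'e_i *m u^T).
Proof.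
move=> x1; have ipP := dotc_inner_product.
have ei := mulmx_delta_axis x i i; rewrite eqxx scale1r in ei.
have ej := mulmx_delta_axis x i j; rewrite (negbTE nij) scale0r in ej.
apply: (extreme_contraction_axis ipP nij); [exact: is_lin_mulmx | | by rewrite ei].
by rewrite (opnorm_axis ipP nij (is_lin_mulmx _) ej) ei (hnorm_eq1 ipP).
Qed.

Lemma extreme_mulmx_col A : extreme_contraction (@dotc R n) (fun u => A *m u^T) ->
  col j A = 0 -> dotc (col i A) (col i A) = 1 /\ A = col i A *m 'e_i.
Proof.
move=> [_ [A1 _]] Aj; split; last exact: col_axis_mx.
apply/(hnorm_eq1 dotc_inner_product); rewrite -mulmx_delta_tr -A1.
by rewrite (opnorm_axis dotc_inner_product nij (is_lin_mulmx A)) // mulmx_delta_tr.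
Qed.

End Axes.

Lemma extreme_rank_one_matrix_iff A : (2 <= n)%N ->
  (\rank A = 1%N /\ extreme_contraction (@dotc R n) (fun u => A *m u^T)) <->
  (exists x : 'cV[R]_n, \sum_(i < n) x i 0 ^+ 2 = 1 /\
     (A = row_mx x (0 : 'cV[R]_n) \/ A = row_mx (0 : 'cV[R]_n) x)).
Proof.
move=> n2; split=> [[rA Aext]|[x [x1 EA]]]; last first.
  have x0 : x != 0 by rewrite -(ip_eq0 dotc_inner_product) -sum_sqr_dotc x1 oner_eq0.
  rewrite sum_sqr_dotc in x1; rewrite row_mx_delta0 row_mx_delta1 in EA.
  by case: EA => ->; rewrite rank_mulmx_delta //; split=> //;
    [apply: (@extreme_mulmx_axis 0 1) | apply: (@extreme_mulmx_axis 1 0)].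
have := rank_one_extreme_axis dotc_inner_product (dotc_orthonormal n2) (is_lin_mulmx A)
  (rank_one_mulmx rA) Aext.
rewrite !mulmx_delta_tr => -[Aj|Aj].
  have [Ai1 EA] := @extreme_mulmx_col 0 1 isT A Aext Aj.
  by exists (col 0 A); rewrite sum_sqr_dotc row_mx_delta0 -EA; split; [|left].
have [Ai1 EA] := @extreme_mulmx_col 1 0 isT A Aext Aj.
by exists (col 1 A); rewrite sum_sqr_dotc row_mx_delta1 -EA; split; [|right].
Qed.

End Matrices.

Theorem mainTheorem14 (R : realType) :
  (forall (H : lmodType R) (ip : H -> H -> R) (T : 'rV[R]_2 -> H),
     is_real_hilbert ip -> is_lin T -> rank_one T -> opnorm ip T = 1 ->
     (extreme_contraction ip T <->
        (MT ip T = [set u | u = e1 R \/ u = - e1 R] \/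
         MT ip T = [set u | u = e2 R \/ u = - e2 R]))) /\
  (forall (n : nat), (2 <= n)%N -> forall A : 'M[R]_(n, 2),
     (\rank A = 1%N /\ extreme_contraction (@dotc R n) (fun u => A *m u^T)) <->
     (exists x : 'cV[R]_n, \sum_(i < n) x i 0 ^+ 2 = 1 /\
        (A = row_mx x (0 : 'cV[R]_n) \/ A = row_mx (0 : 'cV[R]_n) x))).
Proof.
split=> [H ip T hilbert Tlin [Trange _] T1 | n n2 A].
  have [_ _ _ _ orthonormal] := hilbert.
  exact: (extreme_rank_one_iff_MT (real_hilbert_inner_product hilbert) orthonormal Tlin Trange T1).
exact: (extreme_rank_one_matrix_iff A n2).
Qed.
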